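(* Let $i\geq 2$ be an integer and let $D$ be a strong digraph with $D\in\mathcal{LE}_i$. Then $D$ has an independent set of vertices that meets (shares a vertex with) every longest directed path of $D$.
   Context: All digraphs are finite, without loops or multiple arcs. Paths and cycles are directed; the length of a path or cycle is its number of arcs. A set of vertices is independent if no two distinct vertices of it are joined by an arc. A digraph is strong if for every ordered pair of vertices $x,y$ there is a directed path from $x$ to $y$. For a subdigraph $H$ of a digraph $D$, an ear of $H$ in $D$ is either a directed path in $D$ whose two end vertices lie in $H$ and whose internal vertices do not lie in $H$, or a directed cycle in $D$ having exactly one vertex in $H$. An ear decomposition of a strong digraph $D$ is a sequence $(D_0,D_1,\ldots,D_k)$ of strong subdigraphs of $D$ such that $D_0$ is a directed cycle, $D_{j+1}=D_j\cup P_j$ where $P_j$ is an ear of $D_j$ in $D$ for every $j\in\{0,\ldots,k-1\}$, and $D_k=D$. For an integer $i\geq 1$, $\mathcal{LE}_i$ denotes the family of strong digraphs having an ear decomposition in which every ear has length at least $i$. *)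

(* A digraph is a finite vertex type V with an arc relation
   A : rel V (no multiple arcs by construction; looplessness is a hypothesis). *)
From mathcomp Require Import all_boot.
Set Implicit Arguments. Unset Strict Implicit. Unset Printing Implicit Defensive.

Section Digraphs.
Variables (V : finType) (A : rel V).

Definition dpath (p : seq V) : bool :=
  if p is x :: q then path A x q && uniq p else false.

Definition path_len (p : seq V) : nat := (size p).-1.

Definition dcycle (c : seq V) : bool := [&& 1 < size c, uniq c & cycle A c].

Definition path_arcs (p : seq V) : seq (V * V) := zip p (behead p).
Definition cycle_arcs (c : seq V) : seq (V * V) := zip c (rot 1 c).

Definition longest_path (p : seq V) : Prop :=
  dpath p /\ forall q, dpath q -> path_len q <= path_len p.

Definition independent (S : {set V}) : Prop :=
  forall x y, x \in S -> y \in S -> x != y -> ~~ A x y.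

Definition strong : Prop := forall x y : V, connect A x y.

Definition subg := ({set V} * {set V * V})%type.

Definition strong_sub (H : subg) : Prop :=
  forall x y, x \in H.1 -> y \in H.1 ->
    connect (fun u v => (u, v) \in H.2) x y.

Definition full : subg := ([set: V], [set a : V * V | A a.1 a.2]).

Inductive ear := PathEar of seq V | CycleEar of seq V.

Definition ear_len (e : ear) : nat :=
  match e with PathEar p => path_len p | CycleEar c => size c end.

Definition is_ear (H : subg) (e : ear) : Prop :=
  match e with
  | PathEar p =>
      (* p = x :: q, end vertices x and last x q, internal vertices
         behead (belast x q) *)
      if p is x :: q then
        [/\ dpath p, q != [::], x \in H.1, last x q \in H.1 &
            forall y, y \in behead (belast x q) -> y \notin H.1]
      else False
  | CycleEar c => dcycle c /\ #|[set x in c] :&: H.1| = 1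
  end.

Definition ear_verts (e : ear) : seq V :=
  match e with PathEar p => p | CycleEar c => c end.
Definition ear_arcs (e : ear) : seq (V * V) :=
  match e with PathEar p => path_arcs p | CycleEar c => cycle_arcs c end.

Definition add_ear (H : subg) (e : ear) : subg :=
  (H.1 :|: [set x in ear_verts e], H.2 :|: [set a in ear_arcs e]).

Definition cycle_sub (c : seq V) : subg :=
  ([set x in c], [set a in cycle_arcs c]).

(* (D_j, P_j, ..., P_{k-1}) continues an ear decomposition from D_j,
   with all ears of length >= i, every D_{j+1} strong, and D_k = D. *)
Fixpoint ear_seq (i : nat) (H : subg) (es : seq ear) : Prop :=
  match es with
  | [::] => H = full
  | e :: es' => [/\ is_ear H e, i <= ear_len e, strong_sub (add_ear H e)
                   & ear_seq i (add_ear H e) es']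
  end.

Definition LE (i : nat) : Prop :=
  exists (c0 : seq V) (es : seq ear),
    [/\ dcycle c0, strong_sub (cycle_sub c0) & ear_seq i (cycle_sub c0) es].

End Digraphs.

(* Along an ear of length at least 2, every internal vertex has exactly one
   in-neighbour and one out-neighbour, so a longest path through one internal
   vertex must contain all of the ear, ends included (otherwise it could be
   lengthened).  A longest path of D_(j+1) avoiding the new vertices is a longest
   path of D_j.  Hence an independent set S meeting all longest paths of D_j
   still works for D_(j+1) if it contains an end of the ear, and otherwise one
   internal vertex, whose neighbours are the ends and other new vertices, can be
   added to S.  The induction starts from D_0 viewed as a closed ear on one
   vertex. *)
From mathcomp Require Import all_boot.
Set Implicit Arguments. Unset Strict Implicit. Unset Printing Implicit Defensive.

Lemma zip_mem {S T : eqType} (s : seq S) (t : seq T) u v :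
  (u, v) \in zip s t -> (u \in s) && (v \in t).
Proof.
elim: s t => [|x s IH] [|y t] //=; rewrite !in_cons.
by case/orP=> [/eqP [-> ->]|/IH /andP [-> ->]]; rewrite ?eqxx ?orbT.
Qed.

Lemma zip_fst_inj {S T : eqType} (s : seq S) (t : seq T) u u' v :
  uniq t -> (u, v) \in zip s t -> (u', v) \in zip s t -> u = u'.
Proof.
elim: s t => [|x s IH] [|y t] //= /andP [yt ut]; rewrite !in_cons.
case/orP=> [/eqP [-> ->]|uv] /orP [/eqP [-> //]|u'v].
- by rewrite (andP (zip_mem u'v)).2 in yt.
- by move=> vy; rewrite vy in uv; rewrite (andP (zip_mem uv)).2 in yt.
- exact: IH ut uv u'v.
Qed.

Lemma zip_snd_inj {S T : eqType} (s : seq S) (t : seq T) u v v' :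
  uniq s -> (u, v) \in zip s t -> (u, v') \in zip s t -> v = v'.
Proof.
elim: s t => [|x s IH] [|y t] //= /andP [xs us]; rewrite !in_cons.
case/orP=> [/eqP [ux ->]|uv] /orP [/eqP [ux' ->] //|uv'].
- by rewrite ux in uv'; rewrite (andP (zip_mem uv')).1 in xs.
- by rewrite ux' in uv; rewrite (andP (zip_mem uv)).1 in xs.
- exact: IH us uv uv'.
Qed.

Lemma zip_rcons_cons_mem {T : eqType} (x y : T) s u v : s != [::] ->
  (u, v) \in zip (x :: s) (rcons s y) -> (u \in s) || (v \in s).
Proof.
elim: s x => [|a s IH] x // _.
rewrite [zip _ _]/= in_cons => /orP [/eqP [_ ->]|uv]; first by rewrite mem_head orbT.
case: s IH uv => [|b s] IH; first by rewrite /= orbF => /eqP [-> _]; rewrite !inE eqxx.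
by move/(IH a isT); rewrite !in_cons => /orP [] ->; rewrite ?orbT.
Qed.

Lemma path_zip_rcons {T : eqType} (x y : T) s :
  path (fun u v => (u, v) \in zip (x :: s) (rcons s y)) x (rcons s y).
Proof.
elim: s x => [|a s IH] x; first by rewrite /= in_cons eqxx.
rewrite rcons_cons /= in_cons eqxx /=.
by apply: sub_path (IH a) => u v uv; rewrite in_cons uv orbT.
Qed.

Lemma zip_rot {S T : Type} n (s : seq S) (t : seq T) :
  size s = size t -> zip (rot n s) (rot n t) = rot n (zip s t).
Proof.
have zip_rot1 s' t' : size s' = size t' -> zip (rot 1 s') (rot 1 t') = rot 1 (zip s' t').
  by case: s' t' => [|x s'] [|y t'] //= [eq_st]; rewrite !rot1_cons zip_rcons.
move=> eq_st; have eq_zs : size (zip s t) = size s by rewrite size_zip eq_st minnn.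
elim: n => [|n IH]; first by rewrite !rot0.
have [lt_ns | le_sn] := ltnP n (size s).
  have lt_nt : n < size t by rewrite -eq_st.
  have lt_nz : n < size (zip s t) by rewrite eq_zs.
  by rewrite (rotS lt_ns) (rotS lt_nt) (rotS lt_nz) zip_rot1 ?IH // !size_rot.
by rewrite !rot_oversize ?eq_zs -?eq_st // leqW.
Qed.

Lemma zip_rconsl {S T : Type} (s : seq S) (t : seq T) x :
  size s = size t -> zip (rcons s x) t = zip s t.
Proof. by elim: s t => [|a s IH] [|b t] //= [/IH ->]. Qed.

Lemma path_propagate {T : Type} (e : rel T) (Q P : pred T) x s y :
  (forall a b, e a b -> Q b -> P b -> P a) ->
  (forall a b, e a b -> Q a -> P a -> P b) ->
  all Q s -> path e x (rcons s y) -> has P s -> all P (x :: rcons s y).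
Proof.
move=> back fwd; elim: s x => [|a s IH] x //= /andP [Qa Qs] /andP [xa pa] Ps.
have Pa : P a.
  by case/orP: Ps => // Ps; case/andP: (IH a Qs pa Ps).
suff Prest : all P (rcons s y) by rewrite (back x a xa Qa Pa) Pa.
case: s IH Qs pa {Ps} => [|b s] IH Qs pa.
  by rewrite /= (fwd a y _ Qa Pa) //; case/andP: pa.
have ab : e a b by move: pa; rewrite rcons_cons /= => /andP [].
have Pb := fwd a b ab Qa Pa.
by move: (IH a Qs pa); rewrite /= Pb => /(_ isT) /andP [].
Qed.

Lemma dpath_cons {T : finType} (e : rel T) u x q :
  dpath e (x :: q) -> e u x -> u \notin x :: q -> dpath e [:: u, x & q].
Proof.
by case/andP=> pq uq ux uq'; rewrite /dpath cons_uniq uq' uq [path _ _ _]/= ux pq.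
Qed.

Lemma dpath_rcons {T : finType} (e : rel T) x q v :
  dpath e (x :: q) -> e (last x q) v -> v \notin x :: q -> dpath e (rcons (x :: q) v).
Proof.
case/andP=> pq uq qv vq.
by rewrite /dpath rcons_cons rcons_path pq qv -rcons_cons rcons_uniq vq uq.
Qed.

Section Subgraphs.
Variable V : finType.
Implicit Types (H : subg V) (p : seq V) (S : {set V}).

Definition sub_arc H : rel V := fun u v => (u, v) \in H.2.

Definition sub_dpath H p := dpath (sub_arc H) p && all [in H.1] p.

Definition sub_longest H p :=
  sub_dpath H p /\ forall q, sub_dpath H q -> path_len q <= path_len p.

Definition sub_closed H := forall u v, sub_arc H u v -> (u \in H.1) && (v \in H.1).

Definition indep_transversal H S := [/\ S \subset H.1,
  {in S &, forall x y, x != y -> ~~ sub_arc H x y} &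
  forall p, sub_longest H p -> exists2 x, x \in p & x \in S].

Lemma sub_longest_pred H p u z :
  sub_closed H -> sub_longest H p -> sub_arc H u z ->
  (forall u', sub_arc H u' z -> u' = u) -> z \in p -> u \in p.
Proof.
move=> clH [+ maxp] uz in_uniq; case: p maxp => [|x q] // maxp /andP [pxq qH].
rewrite in_cons => /orP [/eqP zx | zq].
  apply: contraT => up; subst z.
  have: sub_dpath H [:: u, x & q].
    by rewrite /sub_dpath dpath_cons //= (andP (clH _ _ uz)).1.
  by move/maxp; rewrite /path_len ltnn.
case/andP: pxq => + _; case/splitPr: zq => q1 q2.
rewrite cat_path /= => /and3P [_ /in_uniq <- _].
by rewrite -cat_cons mem_cat mem_last.
Qed.

Lemma sub_longest_succ H p z v :
  sub_closed H -> sub_longest H p -> sub_arc H z v ->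
  (forall v', sub_arc H z v' -> v' = v) -> z \in p -> v \in p.
Proof.
move=> clH [+ maxp] zv out_uniq; case: p maxp => [|x q] // maxp /andP [pxq qH].
move=> zp; case/splitPl: zp pxq qH maxp => q1 [|w q2] zl pxq qH maxp.
  rewrite cats0 in pxq qH maxp *; apply: contraT => vp.
  have: sub_dpath H (rcons (x :: q1) v).
    by rewrite /sub_dpath dpath_rcons ?zl // all_rcons qH (andP (clH _ _ zv)).2.
  by move/maxp; rewrite /path_len size_rcons ltnn.
case/andP: pxq; rewrite cat_path zl /= => /and3P [_ /out_uniq <- _] _.
by rewrite -cat_cons mem_cat mem_head orbT.
Qed.

Lemma sub_dpath_mono H H' p : H.1 \subset H'.1 -> H.2 \subset H'.2 ->
  sub_dpath H p -> sub_dpath H' p.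
Proof.
move=> /subsetP sub1 /subsetP sub2; case: p => [|x q] // /andP [/andP [pq uq] qH].
rewrite /sub_dpath /dpath uq (sub_all sub1 qH) !andbT.
by apply: sub_path pq => u v /sub2.
Qed.

(* The ear x0 -> I -> xl with new internal vertices I; a cycle ear through h is
   the case x0 = xl = h, and D_0 is such an ear attached to a single vertex. *)
Definition attach H x0 I xl : subg V :=
  (H.1 :|: [set z in I], H.2 :|: [set a in zip (x0 :: I) (rcons I xl)]).

Definition attachable H x0 I xl :=
  [/\ x0 \in H.1, xl \in H.1, [disjoint I & H.1], uniq I & I != [::]].

Section Attach.
Variables (H : subg V) (x0 xl : V) (I : seq V).
Hypotheses (clH : sub_closed H) (x0H : x0 \in H.1) (xlH : xl \in H.1).
Hypotheses (I_new : [disjoint I & H.1]) (uniqI : uniq I) (I_nil : I != [::]).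

Local Notation H' := (attach H x0 I xl).

Lemma attach_arcE u v :
  sub_arc H' u v = sub_arc H u v || ((u, v) \in zip (x0 :: I) (rcons I xl)).
Proof. by rewrite /sub_arc !inE. Qed.

Lemma attach_vertexE z : (z \in H'.1) = (z \in H.1) || (z \in I).
Proof. by rewrite !inE. Qed.

Lemma attach_closed : sub_closed H'.
Proof.
move=> u v; rewrite attach_arcE !attach_vertexE.
case/orP=> [/clH /andP [-> ->] // | /zip_mem /andP []].
rewrite in_cons mem_rcons in_cons.
by case/orP=> [/eqP -> | ->] /orP [/eqP -> | ->]; rewrite ?x0H ?xlH ?orbT.
Qed.

Lemma attach_arc_old u v : sub_arc H' u v -> u \in H.1 -> v \in H.1 -> sub_arc H u v.
Proof.
rewrite attach_arcE => /orP [// | /(zip_rcons_cons_mem I_nil) uvI] uH vH.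
by case/orP: uvI => /(disjointFr I_new); rewrite ?uH ?vH.
Qed.

Lemma attach_arc_from_new u v : u \notin H.1 -> v \in H.1 -> sub_arc H' u v -> v = xl.
Proof.
move=> uH vH; rewrite attach_arcE => /orP [/clH /andP [uH' _] | /zip_mem /andP [_]].
  by rewrite uH' in uH.
by rewrite mem_rcons in_cons (disjointFl I_new vH) orbF => /eqP.
Qed.

Lemma attach_arc_to_new u v : u \in H.1 -> v \notin H.1 -> sub_arc H' u v -> u = x0.
Proof.
move=> uH vH; rewrite attach_arcE => /orP [/clH /andP [_ vH'] | /zip_mem /andP [+ _]].
  by rewrite vH' in vH.
by rewrite in_cons (disjointFl I_new uH) orbF => /eqP.
Qed.

Lemma attach_in_uniq u u' v :
  v \notin H.1 -> sub_arc H' u v -> sub_arc H' u' v -> u = u'.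
Proof.
move=> vH; have oldF w : sub_arc H w v = false.
  by apply: contraNF vH => /clH /andP [].
rewrite !attach_arcE !oldF /=; apply: zip_fst_inj.
by rewrite rcons_uniq uniqI (disjointFl I_new xlH).
Qed.

Lemma attach_out_uniq u v v' :
  u \notin H.1 -> sub_arc H' u v -> sub_arc H' u v' -> v = v'.
Proof.
move=> uH; have oldF w : sub_arc H u w = false.
  by apply: contraNF uH => /clH /andP [].
rewrite !attach_arcE !oldF /=; apply: zip_snd_inj.
by rewrite cons_uniq uniqI (disjointFl I_new x0H).
Qed.

Lemma attach_ear_path : path (sub_arc H') x0 (rcons I xl).
Proof.
by apply: sub_path (path_zip_rcons x0 xl I) => u v uv; rewrite attach_arcE uv orbT.
Qed.

Lemma attach_longest p :
  sub_longest H' p -> sub_longest H p \/ {subset x0 :: rcons I xl <= p}.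
Proof.
move=> lp; have [pH | /allPn [z zp zH]] := boolP (all [in H.1] p).
  left; case: lp => /andP [dp _] maxp; split=> [|q].
    case: p dp pH {maxp} => [|x q] // /andP [pq uq] qH.
    rewrite /sub_dpath /dpath uq qH !andbT.
    by apply: sub_in_path qH pq => u v uH vH /attach_arc_old; apply.
  by move/(@sub_dpath_mono H H' q (subsetUl _ _) (subsetUl _ _)); apply: maxp.
right; apply/allP; apply: (path_propagate (e := sub_arc H') (Q := fun w => w \notin H.1)).
- move=> a b ab bH; apply: (sub_longest_pred attach_closed lp ab).
  by move=> u ub; apply: attach_in_uniq ub ab.
- move=> a b ab aH; apply: (sub_longest_succ attach_closed lp ab).
  by move=> w aw; apply: attach_out_uniq aw ab.
- by apply/allP => w /(disjointFr I_new) ->.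
- exact: attach_ear_path.
apply/hasP; exists z => //; case: lp => /andP [_ /allP /(_ z zp)].
by rewrite attach_vertexE (negbTE zH).
Qed.

Lemma attach_transversal S : indep_transversal H S -> exists S', indep_transversal H' S'.
Proof.
case=> SH S_indep S_cover.
have SH' : S \subset H'.1 := subset_trans SH (subsetUl _ _).
have S_indep' : {in S &, forall x y, x != y -> ~~ sub_arc H' x y}.
  move=> x y xS yS xy; apply: contra (S_indep x y xS yS xy) => /attach_arc_old.
  by apply; apply: (subsetP SH).
have [endS | /norP [x0S xlS]] := boolP ((x0 \in S) || (xl \in S)).
  exists S; split=> // p /attach_longest [/S_cover // | ear_p].
  case/orP: endS => [x0S | xlS]; [exists x0 | exists xl] => //; apply: ear_p.
    exact: mem_head.
  by rewrite in_cons mem_rcons mem_head orbT.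
have zI : head x0 I \in I by rewrite -nth0 mem_nth // lt0n size_eq0.
set z := head x0 I in zI *.
have zH : z \notin H.1 by rewrite (disjointFr I_new zI).
exists (z |: S); split.
- by rewrite subUset sub1set SH' attach_vertexE zI orbT.
- move=> a b; rewrite !in_setU1.
  case/orP=> [/eqP -> | aS] /orP [/eqP -> | bS]; rewrite ?eqxx // => ab.
  + apply: contra xlS => /(attach_arc_from_new zH (subsetP SH b bS)) <-.
    exact: bS.
  + apply: contra x0S => /(attach_arc_to_new (subsetP SH a aS) zH) <-.
    exact: aS.
  + exact: S_indep' ab.
- move=> p /attach_longest [/S_cover [x xp xS] | ear_p].
    by exists x => //; rewrite in_setU1 xS orbT.
  exists z; last by rewrite in_setU1 eqxx.
  by apply: ear_p; rewrite in_cons mem_rcons in_cons zI !orbT.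
Qed.

End Attach.

Definition point_subg (x : V) : subg V := ([set x], set0).

Lemma point_closed x : sub_closed (point_subg x).
Proof. by move=> u v; rewrite /sub_arc inE. Qed.

Lemma point_transversal x : indep_transversal (point_subg x) [set x].
Proof.
split=> // [a b /set1P -> /set1P -> | [|y q] [] //]; first by rewrite eqxx.
by case/andP=> _ /andP [yx _] _; exists y; rewrite ?mem_head.
Qed.

Lemma cycle_arcs_rot k (c : seq V) : cycle_arcs (rot k c) =i cycle_arcs c.
Proof. by move=> a; rewrite /cycle_arcs rot_rot zip_rot ?size_rot // mem_rot. Qed.

Variable A : rel V.

Lemma path_ear_attach H p : is_ear A H (PathEar p) -> 2 <= path_len p ->
  exists x0 I xl, attachable H x0 I xl /\ add_ear H (PathEar p) = attach H x0 I xl.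
Proof.
case: p => [|x q] //=; case/lastP: q => [|I xl] [dp] //.
rewrite last_rcons belast_rcons /= => _ xH xlH I_new.
rewrite /path_len /= size_rcons ltnS lt0n size_eq0 => I_nil.
exists x, I, xl; split; first split=> //.
- by rewrite disjoint_has; apply/hasPn => y /I_new.
- by case/and3P: dp => _ _; rewrite rcons_uniq => /andP [].
rewrite /add_ear /attach /= /path_arcs /= -[zip (x :: _) _]/(zip (rcons (x :: I) xl) _).
rewrite zip_rconsl ?size_rcons //.
congr pair; apply/setP => z; rewrite !inE mem_rcons !in_cons.
by case: eqP => [-> | _]; case: eqP => [-> | _]; rewrite ?xH ?xlH ?orbT.
Qed.

Lemma cycle_ear_attach H c : is_ear A H (CycleEar c) ->
  exists h r, attachable H h r h /\ add_ear H (CycleEar c) = attach H h r h.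
Proof.
case=> /and3P [size_c uniq_c _] /eqP /cards1P [h c_H].
have /setIP [] : h \in [set x in c] :&: H.1 by rewrite c_H set11.
rewrite inE => hc hH; case/rot_to: hc => k r rot_c.
have mem_c z : (z \in c) = (z \in h :: r) by rewrite -(mem_rot k) rot_c.
have uniq_hr : uniq (h :: r) by rewrite -rot_c rot_uniq.
exists h, r; split; first split=> //.
- rewrite disjoint_has; apply/hasPn => z zr; apply/negP => zH.
  have : z \in [set x in c] :&: H.1 by rewrite !inE mem_c in_cons zr orbT zH.
  by rewrite c_H => /set1P zh; case/andP: uniq_hr; rewrite -zh zr.
- by case/andP: uniq_hr.
- by move: size_c; rewrite -(size_rot k) rot_c; case: (r).
rewrite /add_ear /attach /=; congr pair; apply/setP => z; rewrite !inE.
  by rewrite mem_c in_cons; case: eqP => [-> | _]; rewrite ?hH.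
by rewrite -(cycle_arcs_rot k) rot_c /cycle_arcs rot1_cons.
Qed.

Lemma ear_step H e : sub_closed H -> is_ear A H e -> 2 <= ear_len e ->
  sub_closed (add_ear H e) /\
  forall S, indep_transversal H S -> exists S', indep_transversal (add_ear H e) S'.
Proof.
move=> clH ear_e len_e.
have [x0 [I [xl [[x0H xlH I_new uniqI I_nil] ->]]]] :
    exists x0 I xl, attachable H x0 I xl /\ add_ear H e = attach H x0 I xl.
  case: e ear_e len_e => [p | c] ear_e len_e; first exact: path_ear_attach.
  by have [h [r [att ->]]] := cycle_ear_attach ear_e; exists h, r, h.
split=> [|S]; first exact: (attach_closed clH x0H xlH).
exact: (attach_transversal clH x0H xlH).
Qed.

Lemma ear_seq_transversal i H es S : 2 <= i -> sub_closed H ->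
  indep_transversal H S -> ear_seq A i H es -> exists S', indep_transversal (full A) S'.
Proof.
move=> le2i; elim: es H S => [|e es IH] H S clH HS /=; first by move=> <-; exists S.
case=> ear_e len_e _ ears; have [clH' step] := ear_step clH ear_e (leq_trans le2i len_e).
by have [S' HS'] := step S HS; apply: IH clH' HS' ears.
Qed.

Lemma cycle_sub_point_ear x q : dcycle A (x :: q) ->
  is_ear A (point_subg x) (CycleEar (x :: q)) /\
  add_ear (point_subg x) (CycleEar (x :: q)) = cycle_sub (x :: q).
Proof.
move=> cyc; split.
  by split=> //; rewrite /= (setIidPr _) ?cards1 // sub1set inE mem_head.
rewrite /add_ear /cycle_sub /= set0U; congr pair; apply/setP => z.
by rewrite !inE orbA orbb.
Qed.

Lemma sub_dpath_full p : sub_dpath (full A) p = dpath A p.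
Proof.
rewrite /sub_dpath; have -> : all [in (full A).1] p by apply/allP => z; rewrite inE.
rewrite andbT; case: p => [|x q] //=; congr andb.
by apply: eq_path => u v; rewrite /sub_arc inE.
Qed.

End Subgraphs.

Theorem mainTheorem2 (i : nat) (V : finType) (A : rel V) :
  2 <= i ->
  irreflexive A ->
  strong A ->
  LE A i ->
  exists S : {set V},
    independent A S /\
    forall p : seq V, longest_path A p -> exists2 x, x \in p & x \in S.
Proof.
move=> le2i _ _ [[|x q] [es [cyc _ ears]]]; first by case/and3P: cyc.
have [ear0 base] := cycle_sub_point_ear cyc.
have [cl0 tr0] := ear_step (@point_closed _ x) ear0 (proj1 (andP cyc)).
rewrite base in cl0 tr0.
have [S0 HS0] := tr0 _ (point_transversal x).
have [S [_ S_indep S_cover]] := ear_seq_transversal le2i cl0 HS0 ears.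
exists S; split=> [u v uS vS uv | p [dp maxp]].
  by have := S_indep u v uS vS uv; rewrite /sub_arc inE.
by apply: S_cover; split=> [|r]; rewrite sub_dpath_full //; apply: maxp.
Qed.
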